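(* Let $M\in M_n(\mathbb{Z})$ be a symmetric positive semidefinite matrix, and let $\lambda_1$ be its largest eigenvalue. Collapsed values are integers. (i) If $\mu\notin[-1,\lambda_1+\sqrt2]$, then $\mu$ is not a collapsed value of $M$. (ii) The value $\mu=-1$ is a collapsed value of $M$ if either two columns of $M$ are equal or $Me_i=-e_j$ for some $i\neq j$. (iii) If $M$ is positive definite or is the Laplacian of a connected graph, then no $\mu<0$ is a collapsed value of $M$. (iv) If $M$ is positive definite with smallest eigenvalue $\lambda_n>0$, and $\mu$ is a collapsed value of $M$, then $\mu\ge\lambda_n-\sqrt2$.
   Context: For $M\in M_n(\mathbb{Z})$, $\mathrm{Im}(M)$ is the $\mathbb{Z}$-span of its columns; $M$ is spread if the quotient map $\mathbb{Z}^n\to\mathbb{Z}^n/\mathrm{Im}(M)$ is injective on the standard basis $\{e_1,\dots,e_n\}$. An integer $\mu$ is a collapsed value of $M$ if $M-\mu\,\mathrm{Id}$ is not spread. The Laplacian of a graph (multiple edges allowed, no loops) is the matrix with diagonal entries the vertex degrees and off-diagonal $(i,j)$ entry minus the number of edges joining $v_i$ and $v_j$. *)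

From HB Require Import structures.
From mathcomp Require Import all_boot all_order all_algebra.
From mathcomp Require Import all_classical all_reals.
Set Implicit Arguments. Unset Strict Implicit. Unset Printing Implicit Defensive.
Import Order.TTheory GRing.Theory Num.Theory.
Local Open Scope ring_scope.

Definition e_ {n : nat} (i : 'I_n) : 'cV[int]_n := delta_mx i 0.

Definition in_image {n : nat} (M : 'M[int]_n) (v : 'cV[int]_n) : Prop :=
  exists x : 'cV[int]_n, M *m x = v.

(* M is spread: Z^n -> Z^n / Im(M) is injective on {e_1,...,e_n} *)
Definition spread {n : nat} (M : 'M[int]_n) : Prop :=
  forall i j : 'I_n, i != j -> ~ in_image M (e_ i - e_ j).

Definition collapsed_value {n : nat} (M : 'M[int]_n) (mu : int) : Prop :=
  ~ spread (M - mu%:M).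

Definition realmx (R : realType) {n : nat} (M : 'M[int]_n) : 'M[R]_n :=
  map_mx (fun z : int => z%:~R) M.

Definition psd (R : realType) {n : nat} (M : 'M[int]_n) : Prop :=
  forall v : 'cV[R]_n, 0 <= (v^T *m realmx R M *m v) 0 0.

Definition posdef (R : realType) {n : nat} (M : 'M[int]_n) : Prop :=
  forall v : 'cV[R]_n, v != 0 -> 0 < (v^T *m realmx R M *m v) 0 0.

Definition largest_eigenvalue (R : realType) {n : nat} (M : 'M[int]_n) (l : R) :=
  eigenvalue (realmx R M) l /\ forall a : R, eigenvalue (realmx R M) a -> a <= l.

Definition smallest_eigenvalue (R : realType) {n : nat} (M : 'M[int]_n) (l : R) :=
  eigenvalue (realmx R M) l /\ forall a : R, eigenvalue (realmx R M) a -> l <= a.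

(* A multigraph without loops on vertex set 'I_n : w i j = number of edges
   joining v_i and v_j. *)
Definition multigraph {n : nat} (w : 'I_n -> 'I_n -> nat) : Prop :=
  (forall i j, w i j = w j i) /\ (forall i, w i i = 0%N).

Definition graph_connected {n : nat} (w : 'I_n -> 'I_n -> nat) : Prop :=
  forall i j : 'I_n, connect (fun a b => (0 < w a b)%N) i j.

Definition laplacian {n : nat} (w : 'I_n -> 'I_n -> nat) : 'M[int]_n :=
  \matrix_(i, j) (if i == j then (\sum_(k < n) w i k)%:Z else - (w i j)%:Z).

Definition is_connected_laplacian {n : nat} (M : 'M[int]_n) : Prop :=
  exists w, multigraph w /\ graph_connected w /\ M = laplacian w.

Arguments realmx R {n} M.
Arguments psd R {n} M.
Arguments posdef R {n} M.
Arguments largest_eigenvalue R {n} M l.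
Arguments smallest_eigenvalue R {n} M l.

(* If mu is a collapsed value of M, some integer vector x solves
   (M - mu) x = e_i - e_j, and then x^T M x = mu |x|^2 + (x_i - x_j), where
   |x|^2 >= 1 and, x being integral, |x_i - x_j| <= x_i^2 + x_j^2 <= |x|^2.
   So the Rayleigh quotient of M at x is within 1 of mu, which confines mu to
   [lambda_n - 1, lambda_1 + 1] (sharper than the stated sqrt 2), to mu >= -1
   when M is semidefinite and to mu >= 0 when M is definite.  For mu = -1 and
   M semidefinite the form vanishes at x, so M x = 0 and x = e_i - e_j; for a
   connected Laplacian the i-th entry of M (e_i - e_j) is deg v_i + w_ij > 0.
   The Rayleigh bounds come from the spectral theorem for the real symmetric
   M seen as a hermitian complex matrix. *)

From mathcomp Require Import all_boot all_order all_algebra.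
From mathcomp Require Import all_classical all_reals.
From mathcomp Require Import complex spectral sesquilinear.
From mathcomp Require Import zify ring lra.

Set Implicit Arguments.
Unset Strict Implicit.
Unset Printing Implicit Defensive.
Import Order.TTheory GRing.Theory Num.Theory.
Local Open Scope ring_scope.
Local Open Scope sesquilinear_scope.

Definition qform {R : pzRingType} {n : nat} (A : 'M[R]_n) (v : 'cV[R]_n) : R :=
  (v^T *m A *m v) 0 0.

Definition sqnorm {R : pzRingType} {n : nat} (v : 'cV[R]_n) : R := (v^T *m v) 0 0.

Lemma qform_map (R S : pzRingType) (f : {rmorphism R -> S}) n (A : 'M[R]_n) v :
  qform (map_mx f A) (map_mx f v) = f (qform A v).
Proof. by rewrite /qform map_trmx -!map_mxM mxE. Qed.

Lemma sqnorm_map (R S : pzRingType) (f : {rmorphism R -> S}) n (v : 'cV[R]_n) :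
  sqnorm (map_mx f v) = f (sqnorm v).
Proof. by rewrite /sqnorm map_trmx -map_mxM mxE. Qed.

Section SpectralForms.
Variables (C : numClosedFieldType) (n : nat) (B : 'M[C]_n).

Lemma spectral_sqnorm (w : 'cV[C]_n) :
  (w^t* *m w) 0 0 = \sum_k `|(spectralmx B *m w) k 0| ^+ 2.
Proof.
rewrite -[w^t*](mulmxKtV _ (spectral_unitarymx B)) // -mulmxA.
by rewrite -map_mxM -trmx_mul mxE; apply: eq_bigr => k _; rewrite !mxE normCK mulrC.
Qed.

Lemma spectral_qform (w : 'cV[C]_n) : B \is normalmx ->
  (w^t* *m B *m w) 0 0 = \sum_k spectral_diag B 0 k * `|(spectralmx B *m w) k 0| ^+ 2.
Proof.
move=> /orthomx_spectralP BE; rewrite [in LHS]BE invmx_unitary ?spectral_unitarymx //.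
set P := spectralmx B; set y := P *m w.
have -> : w^t* *m (P^t* *m diag_mx (spectral_diag B) *m P) *m w =
          y^t* *m diag_mx (spectral_diag B) *m y.
  by rewrite /y trmx_mul map_mxM !mulmxA.
rewrite mul_mx_diag mxE; apply: eq_bigr => k _; rewrite !mxE normCK; ring.
Qed.

Lemma eigenvalue_spectral_diag k : B \is normalmx -> eigenvalue B (spectral_diag B 0 k).
Proof.
move=> /orthomx_spectralP BE; set P := spectralmx B; set D := spectral_diag B.
apply/eigenvalueP; exists ('e_k *m P).
  rewrite BE !mulmxA mulmxK ?spectral_unit //.
  by rewrite -[_ *m diag_mx _]rowE row_diag_mx -scalemxAl.
rewrite mulmx_free_eq0 ?row_free_unit ?spectral_unit //.
by apply/eqP => /matrixP/(_ 0 k); rewrite !mxE !eqxx => /eqP; rewrite oner_eq0.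
Qed.
End SpectralForms.

Section RealSymmetric.
Variables (R : rcfType) (n : nat) (A : 'M[R]_n).
Hypothesis symA : A^T = A.
Local Notation toC := (real_complex R).

Lemma sym_qform_eigen_sum : exists d : 'I_n -> R, (forall k, eigenvalue A (d k)) /\
  forall v, exists2 u : 'I_n -> R, (forall k, 0 <= u k) &
    qform A v = \sum_k d k * u k /\ sqnorm v = \sum_k u k.
Proof.
pose B := map_mx toC A.
have Breal : B \is a mxOver Num.real.
  by apply/mxOverP => i j; rewrite mxE; apply/complex_realP; exists (A i j).
have Bherm : B \is hermsymmx.
  apply: realsym_hermsym Breal; apply/is_hermitianmxP.
  by rewrite expr0 scale1r map_mx_id // /B map_trmx symA.
have Bnormal := hermitian_normalmx Bherm.
pose D := spectral_diag B.
have DE k : toC (complex.Re (D 0 k)) = D 0 k.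
  by apply: RRe_real; apply: (mxOverP (hermitian_spectral_diag_real Bherm)).
exists (fun k => complex.Re (D 0 k)); split.
  by move=> k; rewrite -(eigenvalue_map toC) /= DE eigenvalue_spectral_diag.
move=> v; pose y := spectralmx B *m map_mx toC v.
exists (fun k => complex.Re (y k 0) ^+ 2 + complex.Im (y k 0) ^+ 2) => [k|].
  by rewrite addr_ge0 ?sqr_ge0.
have vT : (map_mx toC v)^t* = (map_mx toC v)^T.
  by apply/matrixP => i j; rewrite !mxE; apply/conj_Creal/complex_realP; eexists.
split; apply: complexI; rewrite rmorph_sum.
  rewrite -qform_map /qform -vT spectral_qform //; apply: eq_bigr => k _.
  by rewrite rmorphM /= DE add_Re2_Im2.
rewrite -sqnorm_map /sqnorm -vT (spectral_sqnorm B); apply: eq_bigr => k _.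
by rewrite /= add_Re2_Im2.
Qed.

Lemma sym_qform_le_ub (c : R) :
  (forall a, eigenvalue A a -> a <= c) -> forall v, qform A v <= c * sqnorm v.
Proof.
move=> ub v; have [d [eig_d /(_ v) [u u_ge0 [-> ->]]]] := sym_qform_eigen_sum.
by rewrite mulr_sumr; apply: ler_sum => k _; rewrite ler_wpM2r ?ub.
Qed.

Lemma sym_qform_ge_lb (c : R) :
  (forall a, eigenvalue A a -> c <= a) -> forall v, c * sqnorm v <= qform A v.
Proof.
move=> lb v; have [d [eig_d /(_ v) [u u_ge0 [-> ->]]]] := sym_qform_eigen_sum.
by rewrite mulr_sumr; apply: ler_sum => k _; rewrite ler_wpM2r ?lb.
Qed.

End RealSymmetric.

Lemma nonneg_quadratic_lin_coef0 (R : realFieldType) (a b : R) :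
  (forall t, 0 <= 2 * t * b + t ^+ 2 * a) -> b = 0.
Proof.
move=> nonneg; have a_ge0 : 0 <= a.
  by have := nonneg 1; have := nonneg (-1); rewrite sqrrN expr1n; lra.
pose t := - b / (a + 1).
have tE : (a + 1) * t = - b by rewrite /t; field; lra.
have t0 : t = 0.
  apply/eqP; rewrite -sqrf_eq0 eq_le sqr_ge0 andbT.
  by have := nonneg t; rewrite -[b]opprK -tE; nra.
by move: tE; rewrite t0 mulr0 => /eqP; rewrite eq_sym oppr_eq0 => /eqP.
Qed.

Lemma qform_add_scale (R : comPzRingType) n (A : 'M[R]_n) (x z : 'cV[R]_n) (t : R) :
  A^T = A ->
  qform A (x + t *: z) = qform A x + 2 * t * (z^T *m A *m x) 0 0 + t ^+ 2 * qform A z.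
Proof.
move=> symA; have xAz_mx : x^T *m A *m z = z^T *m A *m x.
  by rewrite [LHS]mx11_scalar -tr_scalar_mx -mx11_scalar !trmx_mul trmxK symA mulmxA.
rewrite /qform [(x + _)^T]linearD /= [(t *: z)^T]linearZ /= !mulmxDl !mulmxDr.
by rewrite -!scalemxAl -!scalemxAr scalerA xAz_mx !mxE; ring.
Qed.

Lemma psd_qform_eq0 (R : realFieldType) n (A : 'M[R]_n) (x : 'cV[R]_n) : A^T = A ->
  (forall v, 0 <= qform A v) -> qform A x = 0 -> A *m x = 0.
Proof.
move=> symA psdA qx0; apply/matrixP => k l; rewrite ord1 [RHS]mxE.
apply: (@nonneg_quadratic_lin_coef0 _ (qform A (delta_mx k 0))) => t.
have := psdA (x + t *: delta_mx k 0); rewrite qform_add_scale // qx0 add0r.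
by rewrite -mulmxA trmx_delta -rowE mxE.
Qed.

Lemma sqnorm_gt0 (R : realDomainType) n (v : 'cV[R]_n) : v != 0 -> 0 < sqnorm v.
Proof.
have sq_ge0 k : 0 <= v^T 0 k * v k 0 by rewrite mxE -expr2 sqr_ge0.
move=> v_neq0; rewrite lt0r /sqnorm mxE sumr_ge0 // andbT.
apply: contra v_neq0 => /eqP/(psumr_eq0P (fun k _ => sq_ge0 k)) v0.
apply/eqP/matrixP => k l; have := v0 k isT.
by rewrite ord1 !mxE -expr2 => /eqP; rewrite sqrf_eq0 => /eqP.
Qed.

Lemma int_absdiff_le_sqnorm n (x : 'cV[int]_n) i j :
  i != j -> `|x i 0 - x j 0| <= sqnorm x.
Proof.
move=> ij; have : x i 0 * x i 0 + x j 0 * x j 0 <= sqnorm x.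
  rewrite /sqnorm mxE (bigD1 i) //= (bigD1 j) 1?eq_sym //= !mxE addrA lerDl.
  by apply: sumr_ge0 => k _; rewrite mxE -expr2 sqr_ge0.
have norm_le_sq (c : int) : `|c| <= c * c by nia.
by move/(le_trans _); apply; rewrite (le_trans (ler_normB _ _)) // lerD.
Qed.

Lemma map_intr_inj (R : numDomainType) m n :
  injective (map_mx (intr : int -> R) : 'M_(m, n) -> 'M_(m, n)).
Proof.
move=> A B /matrixP AB; apply/matrixP => i j.
by have := AB i j; rewrite !mxE => /intr_inj.
Qed.

Lemma mulmx_subN1 (R : pzRingType) n (M : 'M[R]_n) (v : 'cV[R]_n) :
  (M - (-1)%:M) *m v = M *m v + v.
Proof. by rewrite mulmxBl mul_scalar_mx scaleN1r opprK. Qed.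

Section CollapsedValues.
Variables (n : nat) (M : 'M[int]_n).

Lemma collapsed_valueP mu : collapsed_value M mu <->
  exists i j (x : 'cV[int]_n), i != j /\ (M - mu%:M) *m x = e_ i - e_ j.
Proof.
split=> [|[i [j [x [ij xE]]]] spreadM]; last exact: spreadM i j ij (ex_intro _ x xE).
move=> /existsNP [i /existsNP [j /not_implyP [ij /contrapT [x xE]]]].
by exists i, j, x.
Qed.

Lemma qform_collapsed_witness mu x i j : (M - mu%:M) *m x = e_ i - e_ j ->
  qform M x = mu * sqnorm x + (x i 0 - x j 0).
Proof.
move=> xE; have : (x^T *m (M - mu%:M) *m x) 0 0 = x i 0 - x j 0.
  by rewrite -mulmxA xE /e_ mulmxBr -!colE !mxE.
rewrite mulmxBr mulmxBl mul_mx_scalar -scalemxAl /qform /sqnorm.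
by move: (x^T *m M *m x) (x^T *m x) => Q S; rewrite !mxE => <-; ring.
Qed.

Lemma collapsed_witness_neq0 mu x i j :
  i != j -> (M - mu%:M) *m x = e_ i - e_ j -> x != 0.
Proof.
move=> ij xE; apply/eqP => x0; move: xE; rewrite x0 mulmx0 => /matrixP/(_ i 0).
by rewrite /e_ !mxE !eqxx (negbTE ij) subr0 => /eqP; rewrite eq_sym oner_eq0.
Qed.

Lemma collapsed_qform_bound mu : collapsed_value M mu ->
  exists2 x : 'cV[int]_n, 0 < sqnorm x & `|qform M x - mu * sqnorm x| <= sqnorm x.
Proof.
case/collapsed_valueP => i [j [x [ij xE]]]; exists x.
  exact/sqnorm_gt0/(collapsed_witness_neq0 ij xE).
by rewrite (qform_collapsed_witness xE) addrC addKr int_absdiff_le_sqnorm.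
Qed.

Variable R : realType.

Lemma realmx_qform x : qform (realmx R M) (map_mx intr x) = (qform M x)%:~R.
Proof. exact: qform_map. Qed.

Lemma realmx_sym : M^T = M -> (realmx R M)^T = realmx R M.
Proof. by move=> symM; rewrite /realmx map_trmx symM. Qed.

Lemma psd_qform_ge0 x : psd R M -> 0 <= qform M x.
Proof. by move=> psdM; rewrite -(ler0z R) -realmx_qform; exact: psdM. Qed.

Lemma psd_collapsed_ge mu : psd R M -> collapsed_value M mu -> -1 <= mu.
Proof.
move=> psdM /collapsed_qform_bound [x s_gt0]; have := psd_qform_ge0 x psdM.
nia.
Qed.

Lemma posdef_collapsed_ge mu : posdef R M -> collapsed_value M mu -> 0 <= mu.
Proof.
move=> pdM /collapsed_qform_bound [x s_gt0].
have x_neq0 : x != 0 by apply: contraTneq s_gt0 => ->; rewrite /sqnorm mulmx0 mxE ltxx.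
have : 0 < qform M x.
  rewrite -(ltr0z R) -realmx_qform; apply: pdM.
  by rewrite -(map_mx0 intr) (inj_eq (@map_intr_inj R _ _)).
nia.
Qed.

Lemma collapsed_le_eigen_ub mu (l : R) : M^T = M ->
  (forall a, eigenvalue (realmx R M) a -> a <= l) ->
  collapsed_value M mu -> mu%:~R <= l + 1.
Proof.
move=> symM ub /collapsed_qform_bound [x s_gt0 bound].
have := sym_qform_le_ub (realmx_sym symM) ub (map_mx intr x).
rewrite realmx_qform sqnorm_map /=.
have : (mu - 1) * sqnorm x <= qform M x by move: bound; rewrite ler_norml; nia.
rewrite -(ler_int R) rmorphM rmorphB /= => lb /(le_trans lb).
by rewrite ler_pM2r ?ltr0z //; lra.
Qed.

Lemma collapsed_ge_eigen_lb mu (l : R) : M^T = M ->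
  (forall a, eigenvalue (realmx R M) a -> l <= a) ->
  collapsed_value M mu -> l - 1 <= mu%:~R.
Proof.
move=> symM lb /collapsed_qform_bound [x s_gt0 bound].
have := sym_qform_ge_lb (realmx_sym symM) lb (map_mx intr x).
rewrite realmx_qform sqnorm_map /=.
have : qform M x <= (mu + 1) * sqnorm x by move: bound; rewrite ler_norml; nia.
rewrite -(ler_int R) rmorphM rmorphD /= => ub /le_trans /(_ ub).
by rewrite ler_pM2r ?ltr0z //; lra.
Qed.

Lemma psd_collapsed_N1_kernel : M^T = M -> psd R M -> collapsed_value M (-1) ->
  exists i j, i != j /\ M *m (e_ i - e_ j) = 0.
Proof.
move=> symM psdM /collapsed_valueP [i [j [x [ij xE]]]]; exists i, j; split => //.
have q0 : qform M x = 0.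
  apply/eqP; rewrite eq_le psd_qform_ge0 // andbT (qform_collapsed_witness xE).
  rewrite mulN1r addrC subr_le0 (le_trans (ler_norm _)) //.
  exact: int_absdiff_le_sqnorm.
have Mx0 : M *m x = 0.
  apply: (@map_intr_inj R); rewrite map_mxM map_mx0.
  by apply: psd_qform_eq0 (realmx_sym symM) psdM _; rewrite realmx_qform q0.
by move: xE; rewrite mulmx_subN1 Mx0 add0r => <-.
Qed.

End CollapsedValues.

Lemma connected_laplacian_basis_diff n (w : 'I_n -> 'I_n -> nat) i j :
  graph_connected w -> i != j -> laplacian w *m (e_ i - e_ j) != 0.
Proof.
move=> conn ij; apply/eqP => /matrixP/(_ i 0).
rewrite /e_ mulmxBr -!colE !mxE eqxx (negbTE ij) => deg_i0.
have [k wik] : exists k, (0 < w i k)%N.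
  have /connectP [[|k p] /= path_ij j_last] := conn i j.
    by rewrite j_last eqxx in ij.
  by case/andP: path_ij; exists k.
by move: deg_i0; rewrite (bigD1 k) //=; lia.
Qed.

Theorem proposition3p4 (R : realType) (n : nat) (M : 'M[int]_n) :
  M^T = M -> psd R M ->
  (* (i) *)
  (forall l1 : R, largest_eigenvalue R M l1 ->
     forall mu : int, (mu < -1 \/ l1 + Num.sqrt 2 < mu%:~R) ->
       ~ collapsed_value M mu) /\
  (* (ii) *)
  ((exists i j : 'I_n, i != j /\ col i M = col j M) \/
   (exists i j : 'I_n, i != j /\ M *m e_ i = - e_ j) ->
     collapsed_value M (-1)) /\
  (* (iii) *)
  (posdef R M \/ is_connected_laplacian M ->
     forall mu : int, mu < 0 -> ~ collapsed_value M mu) /\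
  (* (iv) *)
  (posdef R M -> forall ln : R, smallest_eigenvalue R M ln -> 0 < ln ->
     forall mu : int, collapsed_value M mu -> ln - Num.sqrt 2 <= mu%:~R).
Proof.
move=> symM psdM; have sqrt2_ge1 : 1 <= Num.sqrt (2 : R).
  by rewrite -{1}sqrtr1 ler_sqrt //; lra.
split; [|split; [|split]].
- move=> l [_ l_ub] mu [mu_lt|mu_gt] muC.
    by have := psd_collapsed_ge psdM muC; rewrite leNgt mu_lt.
  by have := collapsed_le_eigen_ub symM l_ub muC; lra.
- case=> [[i [j [ij colij]]] | [i [j [ij Mei]]]]; apply/collapsed_valueP; exists i, j.
    by exists (e_ i - e_ j); rewrite mulmx_subN1 mulmxBr /e_ -!colE colij subrr add0r.
  by exists (e_ i); rewrite mulmx_subN1 Mei addrC.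
- case=> [pdM | [w [_ [conn ME]]]] mu mu_lt0 muC.
    by have := posdef_collapsed_ge pdM muC; rewrite leNgt mu_lt0.
  have mu_N1 : mu = -1 by have := psd_collapsed_ge psdM muC; lia.
  rewrite mu_N1 in muC; have [i [j [ij Mij0]]] := psd_collapsed_N1_kernel symM psdM muC.
  by move: (connected_laplacian_basis_diff conn ij); rewrite -ME Mij0 eqxx.
- move=> _ l [_ l_lb] _ mu muC.
  by have := collapsed_ge_eigen_lb symM l_lb muC; lra.
Qed.
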